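(* Let $g$ be an $n$-person no-sink WTT game form satisfying the standing assumptions below, and suppose $g$ contains a $k$-box for some $1\le k\le n$. Then $g$ contains a $(k-1)$-box or a $1$-box.
   Context: Let $X_1,\dots,X_n$ and $A$ be finite nonempty sets. An $n$-person game form is a map $g: X_1\times\cdots\times X_n\to A$; elements of $X=X_1\times\cdots\times X_n$ are strategy profiles. For a direction $i\in[n]$ write $X_{-i}=\prod_{t\neq i}X_t$, and for $s\in X_i$, $y\in X_{-i}$ write $(s,y)$ for the profile with $i$-th coordinate $s$ and other coordinates $y$. The hyperplane perpendicular to direction $i$ at $s\in X_i$ is $H_s=\{x\in X: x_i=s\}$; for a profile $x$ write $H_i^x$ for the hyperplane perpendicular to direction $i$ containing $x$. $g$ is weakly totally tight (WTT) if for every $i\in[n]$, all $s\neq s'$ in $X_i$ and all $y\neq y'$ in $X_{-i}$, at least one of $g(s,y)=g(s,y')$, $g(s,y)=g(s',y)$, $g(s',y')=g(s',y)$, $g(s',y')=g(s,y')$ holds. A set $S\subseteq X$ is a constant region if there is $c\in A$ with $g(x)=c$ for all $x\in S$. For distinct $j,k\in X_i$, $H_j^{\neq}(k)=\{(j,y): y\in X_{-i},\ g(j,y)\neq g(k,y)\}$. We write $H_j\stackrel{c}{\longrightarrow}H_k$ if $g(x)=c$ for all $x\in H_j^{\neq}(k)$, and $H_j\stackrel{c}{\Longrightarrow}H_k$ if $H_j\stackrel{c}{\longrightarrow}H_k$ and there is no outcome $d$ with $H_k\stackrel{d}{\longrightarrow}H_j$. If there exist $k\in X_i\setminus\{j\}$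 and $c$ with $H_j\stackrel{c}{\Longrightarrow}H_k$, $c$ is called the proper outcome of $H_j$ (for WTT $g$ it does not depend on $k$). We say an outcome $a$ is not the proper outcome of a hyperplane $H$ if $H$ has no proper outcome or its proper outcome differs from $a$. $H_j$ is a sink hyperplane if for every $k\in X_i\setminus\{j\}$ there is an outcome $c_k$ with $H_k\stackrel{c_k}{\longrightarrow}H_j$; $g$ is no-sink if there is no sink hyperplane in any direction. A WTT no-sink $g$ contains a $k$-box if there are profiles $x,y$ such that: $g(x)\neq g(y)$; $x$ and $y$ differ in exactly $k$ coordinates $i_1,\dots,i_k$; and for every $1\le t\le k$, $g(x)$ is not the proper outcome of $H_{i_t}^x$ and $g(y)$ is not the proper outcome of $H_{i_t}^y$. Standing assumptions: no hyperplane of $g$ is a constant region, and for every $i$ and distinct $j,k\in X_i$ there is $y\in X_{-i}$ with $g(j,y)\neq g(k,y)$. *)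

From mathcomp Require Import all_boot.
Unset Printing Implicit Defensive.

Section GameForms.
Variables (n : nat) (X : 'I_n -> finType) (A : finType).

Definition profile := forall i : 'I_n, X i.

(* (s, y): the profile with i-th coordinate s and other coordinates those of y.
   An element y of X_{-i} is represented by a full profile whose i-th
   coordinate is ignored. *)
Definition upd (y : profile) (i : 'I_n) (s : X i) : profile :=
  fun j => match i =P j with
           | ReflectT e => ecast j (X j) e s
           | ReflectF _ => y j
           end.

Definition differ_off (i : 'I_n) (y y' : profile) : Prop :=
  exists j : 'I_n, j != i /\ y j != y' j.

Variable g : profile -> A.

Definition WTT : Prop :=
  forall (i : 'I_n) (s s' : X i) (y y' : profile),
    s != s' -> differ_off i y y' ->
    g (upd y i s) = g (upd y' i s) \/
    g (upd y i s) = g (upd y i s') \/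
    g (upd y' i s') = g (upd y i s') \/
    g (upd y' i s') = g (upd y' i s).

Definition hyperplane_constant (i : 'I_n) (s : X i) : Prop :=
  exists c : A, forall y : profile, g (upd y i s) = c.

Definition arrow (i : 'I_n) (j k : X i) (c : A) : Prop :=
  forall y : profile, g (upd y i j) != g (upd y i k) -> g (upd y i j) = c.

Definition sarrow (i : 'I_n) (j k : X i) (c : A) : Prop :=
  arrow i j k c /\ ~ (exists d : A, arrow i k j d).

Definition proper_outcome (i : 'I_n) (j : X i) (c : A) : Prop :=
  exists k : X i, k != j /\ sarrow i j k c.

Definition sink (i : 'I_n) (j : X i) : Prop :=
  forall k : X i, k != j -> exists c : A, arrow i k j c.

Definition no_sink : Prop := forall (i : 'I_n) (j : X i), ~ sink i j.

(* g contains a k-box; H_i^x is the hyperplane H_{x i} in direction i *)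
Definition has_box (k : nat) : Prop :=
  exists x y : profile,
    g x != g y /\
    #|[set i : 'I_n | x i != y i]| = k /\
    (forall i : 'I_n, x i != y i ->
       ~ proper_outcome i (x i) (g x) /\ ~ proper_outcome i (y i) (g y)).

End GameForms.

Arguments profile {n} X.
Arguments upd {n X} y i s.
Arguments differ_off {n X} i y y'.
Arguments WTT {n X A} g.
Arguments hyperplane_constant {n X A} g i s.
Arguments arrow {n X A} g i j k c.
Arguments sarrow {n X A} g i j k c.
Arguments proper_outcome {n X A} g i j c.
Arguments sink {n X A} g i j.
Arguments no_sink {n X A} g.
Arguments has_box {n X A} g k.

From mathcomp Require Import all_boot.
From Stdlib Require Import FunctionalExtensionality.

(* Pick a direction i in which the two corners x, y of a k-box differ, with
   k >= 2.  Weak total tightness applied to x_i, y_i and the rests of x and y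
   says that one of the two "mixed" profiles, obtained by moving one corner to
   the other's coordinate in direction i, has the outcome of x or of y.  That
   mixed profile together with the appropriate corner is again a box: either
   it differs from the corner in direction i only (a 1-box), or it keeps the
   outcome of its own corner and differs from the other one in k - 1
   directions (a (k-1)-box). *)

Section Update.
Variables (n : nat) (X : 'I_n -> finType).

Lemma upd_same (y : profile X) i (s : X i) : upd y i s i = s.
Proof.
rewrite /upd; case: (i =P i) => [e|//].
by rewrite (eq_axiomK e).
Qed.

Lemma upd_other (y : profile X) i (s : X i) j : j != i -> upd y i s j = y j.
Proof.
move=> ne; rewrite /upd; case: (i =P j) => [e|//]; exfalso.
by move: ne; rewrite e eqxx.
Qed.

Lemma upd_id (x : profile X) i : upd x i (x i) = x.
Proof.
apply: functional_extensionality_dep => j.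
by case: (eqVneq j i) => [->|ne]; rewrite ?upd_same ?upd_other.
Qed.

Definition diffs (u v : profile X) : {set 'I_n} := [set j | u j != v j].

Lemma diffsC u v : diffs u v = diffs v u.
Proof. by apply/setP => j; rewrite !inE eq_sym. Qed.

Lemma diffs_upd_to i (u v : profile X) :
  u i != v i -> diffs u (upd u i (v i)) = [set i].
Proof.
move=> uv; apply/setP => j; rewrite !inE.
by case: (eqVneq j i) => [->|ne]; rewrite ?upd_same ?upd_other ?eqxx.
Qed.

Lemma diffs_upd_from i (u v : profile X) :
  diffs (upd u i (v i)) v = diffs u v :\ i.
Proof.
apply/setP => j; rewrite !inE.
by case: (eqVneq j i) => [->|ne]; rewrite ?upd_same ?upd_other ?eqxx.
Qed.

Lemma card_diffs_upd_from i (u v : profile X) :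
  u i != v i -> #|diffs (upd u i (v i)) v| = #|diffs u v| - 1.
Proof.
move=> uv; rewrite diffs_upd_from (cardsD1 i (diffs u v)) inE uv.
by rewrite add1n subn1.
Qed.

Lemma differ_off_diffs i (u v : profile X) :
  1 < #|diffs u v| -> i \in diffs u v -> differ_off i u v.
Proof.
move=> card2 iuv; have : 0 < #|diffs u v :\ i|.
  by move: card2; rewrite (cardsD1 i) iuv add1n ltnS.
by case/card_gt0P => j; rewrite !inE => /andP [ji uvj]; exists j.
Qed.

End Update.

Arguments diffs {n X} u v.
Arguments diffs_upd_to {n X i u v}.
Arguments card_diffs_upd_from {n X i u v}.

Section Boxes.
Variables (n : nat) (X : 'I_n -> finType) (A : finType) (g : profile X -> A).

Definition box_pair (u v : profile X) : Prop :=
  g u != g v /\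
  forall j : 'I_n, u j != v j ->
    ~ proper_outcome g j (u j) (g u) /\ ~ proper_outcome g j (v j) (g v).

Lemma box_pairC u v : box_pair u v -> box_pair v u.
Proof.
case=> guv improper; split; first by rewrite eq_sym.
by move=> j; rewrite eq_sym => /improper [].
Qed.

Lemma has_box_pair u v : box_pair u v -> has_box g #|diffs u v|.
Proof. by case=> guv improper; exists u, v. Qed.

Lemma box_pair_split i u v :
  box_pair u v -> u i != v i ->
  g (upd u i (v i)) = g u \/ g (upd u i (v i)) = g v ->
  has_box g (#|diffs u v| - 1) \/ has_box g 1.
Proof.
move=> [guv improper] uvi [gw|gw].
- left; rewrite -(card_diffs_upd_from uvi); apply: has_box_pair; split.
    by rewrite gw.
  move=> j; case: (eqVneq j i) => [->|ji]; first by rewrite upd_same eqxx.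
  by rewrite upd_other // gw => /improper.
- right; rewrite -(cards1 i) -(diffs_upd_to uvi); apply: has_box_pair; split.
    by rewrite gw.
  move=> j; case: (eqVneq j i) => [->|ji]; last by rewrite upd_other ?eqxx.
  by rewrite upd_same gw => /improper.
Qed.

End Boxes.

Arguments box_pair {n X A} g u v.
Arguments box_pairC {n X A g u v}.
Arguments box_pair_split {n X A g i u v}.

Theorem mainTheorem6 (n : nat) (X : 'I_n -> finType) (A : finType)
  (g : profile X -> A)
  (HXne : forall i : 'I_n, 0 < #|X i|) (HAne : 0 < #|A|)
  (Hwtt : WTT g) (Hns : no_sink g)
  (Hnc : forall (i : 'I_n) (s : X i), ~ hyperplane_constant g i s)
  (Hdist : forall (i : 'I_n) (j k : X i), j != k ->
             exists y : profile X, g (upd y i j) != g (upd y i k))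
  (k : nat) (Hk : 1 <= k <= n) :
  has_box g k -> has_box g (k - 1) \/ has_box g 1.
Proof.
move=> [x [y [gxy [card_xy improper]]]].
have box_xy : box_pair g x y by split.
have box_yx := box_pairC box_xy.
have card_yx : #|diffs y x| = k by rewrite diffsC.
have [k_le1|k_gt1] := leqP k 1.
  right; have <- : k = 1 by apply/eqP; rewrite eqn_leq k_le1; case/andP: Hk.
  by rewrite -card_xy; apply: has_box_pair.
have : 0 < #|diffs x y| by rewrite card_xy ltnW.
case/card_gt0P => i i_xy; have xyi : x i != y i by rewrite inE in i_xy.
have yxi : y i != x i by rewrite eq_sym.
have off_xy : differ_off i x y by apply: differ_off_diffs; rewrite ?card_xy.
case: (Hwtt i (x i) (y i) x y xyi off_xy) => [h|[h|[h|h]]]; rewrite !upd_id in h.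
- by rewrite -card_yx; apply: (box_pair_split box_yx yxi); right.
- by rewrite -card_xy; apply: (box_pair_split box_xy xyi); left.
- by rewrite -card_xy; apply: (box_pair_split box_xy xyi); right.
- by rewrite -card_yx; apply: (box_pair_split box_yx yxi); left.
Qed.
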